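(* Let $S$ be an abundant semigroup with a quasi-ideal adequate transversal $S^0$, let $R=\{x\in S:e_x=e_{\bar x}\}$, $L=\{x\in S:f_x=f_{\bar x}\}$ and $T=\{(x,a)\in L\times R:\bar x=\bar a\}$, equipped with the multiplication $(x,a)(y,b)=(e_xay,\,ayf_b)$ (products computed in $S$; this multiplication is well defined, i.e. its values lie in $T$). Then $T$ is an abundant semigroup and $T\cong S$.
   Context: For a semigroup $S$, $\mathcal{R}^\ast=\{(a,b): \text{for all } x,y\in S^1,\ xa=ya \iff xb=yb\}$ and $\mathcal{L}^\ast$ dually. $S$ is abundant if every $\mathcal{R}^\ast$-class and $\mathcal{L}^\ast$-class contains an idempotent; adequate if abundant with commuting idempotents. In an adequate semigroup $a^+,a^\ast$ are the unique idempotents $\mathcal{R}^\ast$-, resp. $\mathcal{L}^\ast$-related to $a$. A subsemigroup $U$ of abundant $S$ is a $\ast$-subsemigroup if $U$ is abundant and $\mathcal{L}^\ast_U=\mathcal{L}^\ast_S\cap(U\times U)$, $\mathcal{R}^\ast_U=\mathcal{R}^\ast_S\cap(U\times U)$. An adequate $\ast$-subsemigroup $S^0$ of abundant $S$ is an adequate transversal if for each $x\in S$ there is a unique $\bar x\in S^0$ and idempotents $e,f$ of $S$ with $x=e\bar xf$, $e\,\mathcal{L}\,\bar x^+$, $f\,\mathcal{R}\,\bar x^\ast$; these $e,f$ are unique and denoted $e_x,f_x$. It is a quasi-ideal adequate transversal if moreover $S^0SS^0\subseteq S^0$. *)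

Section SG.
Context {A : Type} (m : A -> A -> A).

(* left / right multiplication by an element of A^1 (None = adjoined identity) *)
Definition mul1l (u : option A) (a : A) : A :=
  match u with None => a | Some x => m x a end.
Definition mul1r (a : A) (u : option A) : A :=
  match u with None => a | Some x => m a x end.
Definition in1 (P : A -> Prop) (u : option A) : Prop :=
  match u with None => True | Some x => P x end.

Definition fullset : A -> Prop := fun _ => True.

Definition RstarP (P : A -> Prop) (a b : A) : Prop :=
  forall u v, in1 P u -> in1 P v ->
    (mul1l u a = mul1l v a <-> mul1l u b = mul1l v b).
Definition LstarP (P : A -> Prop) (a b : A) : Prop :=
  forall u v, in1 P u -> in1 P v ->
    (mul1r a u = mul1r a v <-> mul1r b u = mul1r b v).

Definition idem (e : A) : Prop := m e e = e.

Definition closed (P : A -> Prop) : Prop :=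
  forall a b, P a -> P b -> P (m a b).
Definition assoc_on (P : A -> Prop) : Prop :=
  forall a b c, P a -> P b -> P c -> m (m a b) c = m a (m b c).

Definition abundant_in (P : A -> Prop) : Prop :=
  (forall a, P a -> exists e, P e /\ idem e /\ RstarP P a e) /\
  (forall a, P a -> exists e, P e /\ idem e /\ LstarP P a e).
Definition abundant : Prop := abundant_in fullset.

Definition star_sub (P : A -> Prop) : Prop :=
  closed P /\ abundant_in P /\
  (forall a b, P a -> P b -> (RstarP P a b <-> RstarP fullset a b)) /\
  (forall a b, P a -> P b -> (LstarP P a b <-> LstarP fullset a b)).

Definition adequate_star_sub (P : A -> Prop) : Prop :=
  star_sub P /\
  (forall e f, P e -> P f -> idem e -> idem f -> m e f = m f e).

Definition GreenL (a b : A) : Prop :=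
  exists u v, a = mul1l u b /\ b = mul1l v a.
Definition GreenR (a b : A) : Prop :=
  exists u v, a = mul1r b u /\ b = mul1r a v.

Definition is_plus (P : A -> Prop) (a e : A) : Prop :=
  P e /\ idem e /\ RstarP P a e.
Definition is_star (P : A -> Prop) (a f : A) : Prop :=
  P f /\ idem f /\ LstarP P a f.

Definition transversal_data (P : A -> Prop) (x xb e f : A) : Prop :=
  P xb /\ idem e /\ idem f /\ x = m (m e xb) f /\
  (exists p, is_plus P xb p /\ GreenL e p) /\
  (exists q, is_star P xb q /\ GreenR f q).

Definition adequate_transversal (P : A -> Prop) : Prop :=
  adequate_star_sub P /\
  forall x, exists! xb, exists e f, transversal_data P x xb e f.

Definition qi_adequate_transversal (P : A -> Prop) : Prop :=
  adequate_transversal P /\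
  forall a s b, P a -> P b -> P (m (m a s) b).

End SG.

(* The map s ↦ (e_s s̄, s̄ f_s) is a bijection of S onto T: both components have transversal s̄,
   and s is recovered as e_s s̄ f_s.  It is a homomorphism because s t = e_s w f_t with
   w = s̄ f_s e_t t̄ in S0 (S0 is a quasi-ideal), so the decomposition of s t is
   (e_s w⁺) w (w* f_t).  T, being an isomorphic copy of S, is then an abundant semigroup.
   Adequacy of S0 and the ∗-subsemigroup condition make e_x, f_x unique once x̄ is fixed. *)

From Stdlib Require Import Setoid.

Set Implicit Arguments.

Lemma in1_fullset {A : Type} (u : option A) : in1 fullset u.
Proof. destruct u; exact I. Qed.

Lemma GreenL_refl {A : Type} (mul : A -> A -> A) (a : A) : GreenL mul a a.
Proof. exists None, None; split; reflexivity. Qed.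

Lemma GreenR_refl {A : Type} (mul : A -> A -> A) (a : A) : GreenR mul a a.
Proof. exists None, None; split; reflexivity. Qed.

Lemma abundant_transport (A T : Type) (mul : A -> A -> A) (mulT : T -> T -> T)
    (inT : T -> Prop) (phi : A -> T)
    (mulA : forall a b c, mul (mul a b) c = mul a (mul b c))
    (abundA : abundant mul)
    (phi_in : forall s, inT (phi s))
    (phi_onto : forall p, inT p -> exists s, phi s = p)
    (phi_inj : forall s t, phi s = phi t -> s = t)
    (phiM : forall s t, phi (mul s t) = mulT (phi s) (phi t)) :
  closed mulT inT /\ assoc_on mulT inT /\ abundant_in mulT inT.
Proof.
  assert (phi_eq : forall a b, phi a = phi b <-> a = b)
    by (split; [apply phi_inj | intros ->; reflexivity]).
  assert (lift1 : forall u, in1 inT u -> exists u', forall x,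
      mul1l mulT u (phi x) = phi (mul1l mul u' x) /\
      mul1r mulT (phi x) u = phi (mul1r mul x u')).
  { intros [u|] Hu.
    - destruct (phi_onto u Hu) as [u' <-].
      exists (Some u'); intro x; simpl; rewrite !phiM; split; reflexivity.
    - exists None; split; reflexivity. }
  split; [|split; [|split]].
  - intros a b Ha Hb.
    destruct (phi_onto a Ha) as [s <-], (phi_onto b Hb) as [t <-].
    rewrite <- phiM; apply phi_in.
  - intros a b c Ha Hb Hc.
    destruct (phi_onto a Ha) as [s <-], (phi_onto b Hb) as [t <-], (phi_onto c Hc) as [r <-].
    rewrite <- !phiM, mulA; reflexivity.
  - intros a Ha. destruct (phi_onto a Ha) as [s <-].
    destruct (proj1 abundA s I) as [e [_ [He HR]]].
    exists (phi e); split; [apply phi_in | split].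
    + unfold idem; rewrite <- phiM, He; reflexivity.
    + intros u v Hu Hv.
      destruct (lift1 u Hu) as [u' Hu'], (lift1 v Hv) as [v' Hv'].
      rewrite !(proj1 (Hu' _)), !(proj1 (Hv' _)), !phi_eq.
      apply HR; apply in1_fullset.
  - intros a Ha. destruct (phi_onto a Ha) as [s <-].
    destruct (proj2 abundA s I) as [e [_ [He HL]]].
    exists (phi e); split; [apply phi_in | split].
    + unfold idem; rewrite <- phiM, He; reflexivity.
    + intros u v Hu Hv.
      destruct (lift1 u Hu) as [u' Hu'], (lift1 v Hv) as [v' Hv'].
      rewrite !(proj2 (Hu' _)), !(proj2 (Hv' _)), !phi_eq.
      apply HL; apply in1_fullset.
Qed.

Section Idempotents.

Variables (S : Type) (mul : S -> S -> S).
Local Infix "·" := mul (at level 40, left associativity).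
Hypothesis mulA : forall a b c, a · b · c = a · (b · c).

Lemma GreenL_idem (e p : S) :
  idem mul e -> idem mul p -> GreenL mul e p -> e · p = e /\ p · e = p.
Proof.
  intros He Hp [u [v [Hu Hv]]]; split.
  - destruct u as [u|]; simpl in Hu; rewrite Hu; [rewrite mulA, Hp | apply Hp]; reflexivity.
  - destruct v as [v|]; simpl in Hv.
    + rewrite Hv at 1; rewrite mulA, He; symmetry; exact Hv.
    + subst p; exact He.
Qed.

Lemma GreenR_idem (f q : S) :
  idem mul f -> idem mul q -> GreenR mul f q -> q · f = f /\ f · q = q.
Proof.
  intros Hf Hq [u [v [Hu Hv]]]; split.
  - destruct u as [u|]; simpl in Hu; rewrite Hu; [rewrite <- mulA, Hq | apply Hq]; reflexivity.
  - destruct v as [v|]; simpl in Hv.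
    + rewrite Hv at 1; rewrite <- mulA, Hf; symmetry; exact Hv.
    + subst q; exact Hf.
Qed.

Lemma GreenL_idem_mulr (e p0 p : S) :
  idem mul e -> idem mul p0 -> idem mul p -> GreenL mul e p0 -> p · p0 = p ->
  idem mul (e · p) /\ GreenL mul (e · p) p.
Proof.
  intros He Hp0 Hp HL Hpp0.
  assert (Hpe : p · e = p)
    by (rewrite <- Hpp0 at 1; rewrite mulA, (proj2 (GreenL_idem He Hp0 HL)); exact Hpp0).
  split.
  - unfold idem; rewrite mulA, <- (mulA p e p), Hpe, Hp; reflexivity.
  - exists (Some e), (Some p); split; [reflexivity|]; simpl.
    rewrite <- mulA, Hpe, Hp; reflexivity.
Qed.

Lemma GreenR_idem_mull (f q0 q : S) :
  idem mul f -> idem mul q0 -> idem mul q -> GreenR mul f q0 -> q0 · q = q ->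
  idem mul (q · f) /\ GreenR mul (q · f) q.
Proof.
  intros Hf Hq0 Hq HR Hq0q.
  assert (Hfq : f · q = q)
    by (rewrite <- Hq0q at 1; rewrite <- mulA, (proj2 (GreenR_idem Hf Hq0 HR)); exact Hq0q).
  split.
  - unfold idem; rewrite mulA, <- (mulA f q f), Hfq, <- mulA, Hq; reflexivity.
  - exists (Some f), (Some q); split; [reflexivity|]; simpl.
    rewrite mulA, Hfq, Hq; reflexivity.
Qed.

End Idempotents.

Section PlusStar.

Variables (S : Type) (mul : S -> S -> S) (S0 : S -> Prop).
Local Infix "·" := mul (at level 40, left associativity).

Lemma is_plus_fix (w p : S) : is_plus mul S0 w p -> p · w = w.
Proof. intros [Sp [Ip HR]]; apply (HR (Some p) None Sp I); exact Ip. Qed.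

Lemma is_star_fix (w q : S) : is_star mul S0 w q -> w · q = w.
Proof. intros [Sq [Iq HL]]; apply (HL (Some q) None Sq I); exact Iq. Qed.

Lemma is_plus_absorb {w p u : S} : is_plus mul S0 w p -> S0 u -> u · w = w -> u · p = p.
Proof. intros [Sp [Ip HR]] Su Huw; apply (HR (Some u) None Su I); exact Huw. Qed.

Lemma is_star_absorb {w q u : S} : is_star mul S0 w q -> S0 u -> w · u = w -> q · u = q.
Proof. intros [Sq [Iq HL]] Su Hwu; apply (HL (Some u) None Su I); exact Hwu. Qed.

Lemma transversal_data_self (w p q : S) :
  S0 w -> is_plus mul S0 w p -> is_star mul S0 w q -> transversal_data mul S0 w w p q.
Proof.
  intros Sw Pp Pq.
  split; [exact Sw | split; [apply Pp | split; [apply Pq | split]]].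
  - rewrite (is_plus_fix Pp), (is_star_fix Pq); reflexivity.
  - split; [exists p | exists q]; split; auto using GreenL_refl, GreenR_refl.
Qed.

Hypothesis S0_idem_comm :
  forall e f, S0 e -> S0 f -> idem mul e -> idem mul f -> e · f = f · e.

Lemma is_plus_unique (w p p' : S) : is_plus mul S0 w p -> is_plus mul S0 w p' -> p = p'.
Proof.
  intros Pp Pp'.
  rewrite <- (is_plus_absorb Pp' (proj1 Pp) (is_plus_fix Pp)).
  rewrite S0_idem_comm by (apply Pp || apply Pp').
  symmetry; exact (is_plus_absorb Pp (proj1 Pp') (is_plus_fix Pp')).
Qed.

Lemma is_star_unique (w q q' : S) : is_star mul S0 w q -> is_star mul S0 w q' -> q = q'.
Proof.
  intros Pq Pq'.
  rewrite <- (is_star_absorb Pq' (proj1 Pq) (is_star_fix Pq)).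
  rewrite S0_idem_comm by (apply Pq || apply Pq').
  symmetry; exact (is_star_absorb Pq (proj1 Pq') (is_star_fix Pq')).
Qed.

End PlusStar.

Section TransversalUnique.

Variables (S : Type) (mul : S -> S -> S) (S0 : S -> Prop).
Local Infix "·" := mul (at level 40, left associativity).
Hypothesis mulA : forall a b c, a · b · c = a · (b · c).
Hypothesis S0_idem_comm :
  forall e f, S0 e -> S0 f -> idem mul e -> idem mul f -> e · f = f · e.
Hypothesis S0_RstarP : forall a b, S0 a -> S0 b -> RstarP mul S0 a b -> RstarP mul fullset a b.
Hypothesis S0_LstarP : forall a b, S0 a -> S0 b -> LstarP mul S0 a b -> LstarP mul fullset a b.

Lemma transversal_data_unique_l (x xb e f e' f' : S) :
  transversal_data mul S0 x xb e f -> transversal_data mul S0 x xb e' f' -> e = e'.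
Proof.
  intros [Sxb [Ie [If [Hx [[p [Pp GLp]] [q [Pq GRq]]]]]]]
         [_ [Ie' [_ [Hx' [[p' [Pp' GLp']] _]]]]].
  rewrite <- (is_plus_unique S0_idem_comm Pp Pp') in GLp'.
  destruct (GreenL_idem mulA Ie (proj1 (proj2 Pp)) GLp) as [Hep Hpe].
  destruct (GreenL_idem mulA Ie' (proj1 (proj2 Pp)) GLp') as [He'p _].
  assert (He'x : e' · x = x) by (rewrite Hx', <- !mulA, Ie'; reflexivity).
  (* cancel [f] on the right against [q], then [xb] against [p] using [xb R* p] in [S] *)
  assert (He'exb : e' · e · xb = e · xb).
  { apply (f_equal (fun z => z · q)) in He'x.
    rewrite Hx, !mulA, (proj2 (GreenR_idem mulA If (proj1 (proj2 Pq)) GRq)),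
      (is_star_fix Pq) in He'x.
    rewrite !mulA; exact He'x. }
  assert (He'e : e' · e = e).
  { pose proof (S0_RstarP Sxb (proj1 Pp) (proj2 (proj2 Pp)) (Some (e' · e)) (Some e) I I)
      as Hxbp; simpl in Hxbp.
    rewrite <- Hep at 2; rewrite <- (proj1 Hxbp He'exb), mulA, Hep; reflexivity. }
  rewrite <- He'e, <- He'p at 1; rewrite mulA, Hpe, He'p; reflexivity.
Qed.

Lemma transversal_data_unique_r (x xb e f e' f' : S) :
  transversal_data mul S0 x xb e f -> transversal_data mul S0 x xb e' f' -> f = f'.
Proof.
  intros [Sxb [Ie [If [Hx [[p [Pp GLp]] [q [Pq GRq]]]]]]]
         [_ [_ [If' [Hx' [_ [q' [Pq' GRq']]]]]]].
  rewrite <- (is_star_unique S0_idem_comm Pq Pq') in GRq'.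
  destruct (GreenR_idem mulA If (proj1 (proj2 Pq)) GRq) as [Hqf Hfq].
  destruct (GreenR_idem mulA If' (proj1 (proj2 Pq)) GRq') as [Hqf' _].
  assert (Hxf' : x · f' = x) by (rewrite Hx', !mulA, If'; reflexivity).
  assert (Hxbff' : xb · (f · f') = xb · f).
  { apply (f_equal (fun z => p · z)) in Hxf'.
    rewrite Hx, <- !mulA, (proj2 (GreenL_idem mulA Ie (proj1 (proj2 Pp)) GLp)),
      (is_plus_fix Pp) in Hxf'.
    rewrite <- !mulA; exact Hxf'. }
  assert (Hff' : f · f' = f).
  { pose proof (S0_LstarP Sxb (proj1 Pq) (proj2 (proj2 Pq)) (Some (f · f')) (Some f) I I)
      as Hxbq; simpl in Hxbq.
    rewrite <- Hqf at 2; rewrite <- (proj1 Hxbq Hxbff'), <- mulA, Hqf; reflexivity. }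
  rewrite <- Hff', <- Hqf' at 1; rewrite <- mulA, Hfq, Hqf'; reflexivity.
Qed.

End TransversalUnique.

Unset Implicit Arguments.

Section QuasiIdealTransversal.

Variables (S : Type) (mul : S -> S -> S) (S0 : S -> Prop) (bar ex fx : S -> S).
Local Infix "·" := mul (at level 40, left associativity).
Hypothesis mulA : forall a b c, a · b · c = a · (b · c).
Hypothesis S0_qi : qi_adequate_transversal mul S0.
Hypothesis bar_data : forall x, transversal_data mul S0 x (bar x) (ex x) (fx x).

Let S0_idem_comm : forall e f, S0 e -> S0 f -> idem mul e -> idem mul f -> e · f = f · e.
Proof. apply S0_qi. Qed.

Let S0_RstarP : forall a b, S0 a -> S0 b -> RstarP mul S0 a b -> RstarP mul fullset a b.
Proof. intros a b Sa Sb; apply S0_qi; assumption. Qed.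

Let S0_LstarP : forall a b, S0 a -> S0 b -> LstarP mul S0 a b -> LstarP mul fullset a b.
Proof. intros a b Sa Sb; apply S0_qi; assumption. Qed.

Let S0_plus : forall w, S0 w -> exists p, is_plus mul S0 w p.
Proof. apply S0_qi. Qed.

Let S0_star : forall w, S0 w -> exists q, is_star mul S0 w q.
Proof. apply S0_qi. Qed.

Lemma transversal_data_inv {x xb e f : S} :
  transversal_data mul S0 x xb e f -> xb = bar x /\ e = ex x /\ f = fx x.
Proof.
  intros Hd.
  assert (Hxb : xb = bar x).
  { destruct (proj2 (proj1 S0_qi) x) as [x0 [_ Hx0]].
    rewrite <- (Hx0 xb (ex_intro _ e (ex_intro _ f Hd))).
    apply Hx0; exists (ex x), (fx x); apply bar_data. }
  subst xb; split; [reflexivity | split].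
  - exact (transversal_data_unique_l mulA S0_idem_comm S0_RstarP Hd (bar_data x)).
  - exact (transversal_data_unique_r mulA S0_idem_comm S0_LstarP Hd (bar_data x)).
Qed.

Lemma bar_plus_star (s : S) :
  is_plus mul S0 (bar s) (ex (bar s)) /\ is_star mul S0 (bar s) (fx (bar s)).
Proof.
  destruct (bar_data s) as [Sxb [_ [_ [_ [[p [Pp _]] [q [Pq _]]]]]]].
  destruct (transversal_data_inv (transversal_data_self Sxb Pp Pq)) as [_ [<- <-]].
  split; assumption.
Qed.

Definition ex_bar (s : S) : S := ex s · bar s.
Definition bar_fx (s : S) : S := bar s · fx s.

Lemma ex_bar_data (s : S) : transversal_data mul S0 (ex_bar s) (bar s) (ex s) (fx (bar s)).
Proof.
  destruct (bar_data s) as [Sxb [Ie [_ [_ [GLp _]]]]].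
  destruct (bar_plus_star s) as [_ Pq].
  split; [exact Sxb | split; [exact Ie | split; [apply Pq | split]]].
  - unfold ex_bar; rewrite mulA, (is_star_fix Pq); reflexivity.
  - split; [exact GLp | exists (fx (bar s)); split; [exact Pq | apply GreenR_refl]].
Qed.

Lemma bar_fx_data (s : S) : transversal_data mul S0 (bar_fx s) (bar s) (ex (bar s)) (fx s).
Proof.
  destruct (bar_data s) as [Sxb [_ [If [_ [_ GRq]]]]].
  destruct (bar_plus_star s) as [Pp _].
  split; [exact Sxb | split; [apply Pp | split; [exact If | split]]].
  - unfold bar_fx; rewrite (is_plus_fix Pp); reflexivity.
  - split; [exists (ex (bar s)); split; [exact Pp | apply GreenL_refl] | exact GRq].
Qed.

(* [s t = e_s (s̄ f_s e_t t̄) f_t] with the middle factor in [S0] by the quasi-ideal property;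
   correcting [e_s], [f_t] by its idempotents [w^+], [w^*] gives the decomposition of [s t]. *)
Lemma mul_data (s t : S) :
  let w := bar s · (fx s · ex t) · bar t in
  exists p q, p · w = w /\ w · q = w /\
    transversal_data mul S0 (s · t) w (ex s · p) (q · fx t).
Proof.
  intros w.
  destruct (bar_data s) as [Sxbs [Ies [_ [Hs [[p0 [Pp0 GLp0]] _]]]]].
  destruct (bar_data t) as [Sxbt [_ [Ift [Ht [_ [q0 [Pq0 GRq0]]]]]]].
  assert (Sw : S0 w) by (apply (proj2 S0_qi); assumption).
  destruct (S0_plus w Sw) as [p Pp], (S0_star w Sw) as [q Pq].
  assert (Hp0w : p0 · w = w)
    by (unfold w; rewrite <- !mulA, (is_plus_fix Pp0); reflexivity).
  assert (Hwq0 : w · q0 = w) by (unfold w; rewrite mulA, (is_star_fix Pq0); reflexivity).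
  assert (Hpp0 : p · p0 = p).
  { rewrite S0_idem_comm by (apply Pp || apply Pp0).
    exact (is_plus_absorb Pp (proj1 Pp0) Hp0w). }
  assert (Hq0q : q0 · q = q).
  { rewrite S0_idem_comm by (apply Pq || apply Pq0).
    exact (is_star_absorb Pq (proj1 Pq0) Hwq0). }
  destruct (GreenL_idem_mulr mulA Ies (proj1 (proj2 Pp0)) (proj1 (proj2 Pp)) GLp0 Hpp0)
    as [Iep GLep].
  destruct (GreenR_idem_mull mulA Ift (proj1 (proj2 Pq0)) (proj1 (proj2 Pq)) GRq0 Hq0q)
    as [Iqf GRqf].
  exists p, q; split; [exact (is_plus_fix Pp) | split; [exact (is_star_fix Pq) |]].
  split; [exact Sw | split; [exact Iep | split; [exact Iqf | split]]].
  - rewrite (mulA (ex s) p w), (is_plus_fix Pp), <- (mulA _ q), (mulA (ex s) w q),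
      (is_star_fix Pq).
    rewrite Hs at 1; rewrite Ht at 1; unfold w; rewrite !mulA; reflexivity.
  - split; [exists p | exists q]; split; assumption.
Qed.

Definition in_T (p : S * S) : Prop :=
  fx (fst p) = fx (bar (fst p)) /\ ex (snd p) = ex (bar (snd p)) /\ bar (fst p) = bar (snd p).

Definition mul_T (p q : S * S) : S * S :=
  (ex (fst p) · snd p · fst q, snd p · fst q · fx (snd q)).

Definition to_T (s : S) : S * S := (ex_bar s, bar_fx s).

Lemma to_T_in (s : S) : in_T (to_T s).
Proof.
  destruct (transversal_data_inv (ex_bar_data s)) as [Hb1 [_ Hf1]].
  destruct (transversal_data_inv (bar_fx_data s)) as [Hb2 [He2 _]].
  unfold in_T; simpl; rewrite <- Hb1, <- Hb2, <- Hf1, <- He2; auto.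
Qed.

Lemma to_T_mul (s t : S) : to_T (s · t) = mul_T (to_T s) (to_T t).
Proof.
  destruct (mul_data s t) as [p [q [Hpw [Hwq Hst]]]].
  destruct (transversal_data_inv (ex_bar_data s)) as [_ [Hes _]].
  destruct (transversal_data_inv (bar_fx_data t)) as [_ [_ Hft]].
  unfold mul_T; simpl; rewrite <- Hes, <- Hft.
  unfold to_T, ex_bar, bar_fx.
  destruct (transversal_data_inv Hst) as [<- [<- <-]].
  rewrite (mulA (ex s) p), Hpw, <- (mulA _ q), Hwq.
  f_equal; rewrite !mulA; reflexivity.
Qed.

Lemma to_T_inj (s t : S) : to_T s = to_T t -> s = t.
Proof.
  intros Hst; injection Hst as Heb Hbf.
  destruct (transversal_data_inv (ex_bar_data s)) as [Hbs [Hes _]].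
  destruct (transversal_data_inv (ex_bar_data t)) as [Hbt [Het _]].
  destruct (transversal_data_inv (bar_fx_data s)) as [_ [_ Hfs]].
  destruct (transversal_data_inv (bar_fx_data t)) as [_ [_ Hft]].
  destruct (bar_data s) as [_ [_ [_ [Hs _]]]], (bar_data t) as [_ [_ [_ [Ht _]]]].
  rewrite Hs, Ht, Hbs, Hbt, Hes, Het, Hfs, Hft, Heb, Hbf; reflexivity.
Qed.

Lemma to_T_onto (p : S * S) : in_T p -> exists s, to_T s = p.
Proof.
  destruct p as [x a]; intros [HLx [HRa Hxa]]; simpl in *.
  destruct (bar_data x) as [Sxb [Iex [_ [Hx [GLx _]]]]].
  destruct (bar_data a) as [_ [_ [Ifa [Ha [_ GRa]]]]].
  rewrite <- Hxa in GRa.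
  assert (Hd : transversal_data mul S0 (ex x · bar x · fx a) (bar x) (ex x) (fx a))
    by (repeat split; assumption).
  exists (ex x · bar x · fx a); unfold to_T, ex_bar, bar_fx.
  destruct (transversal_data_inv Hd) as [<- [<- <-]].
  destruct (bar_plus_star x) as [Pex Pfx].
  f_equal.
  - rewrite Hx at 3; rewrite HLx, mulA, (is_star_fix Pfx); reflexivity.
  - rewrite Ha at 2; rewrite HRa, <- Hxa, (is_plus_fix Pex); reflexivity.
Qed.

End QuasiIdealTransversal.

Theorem lemma2p5 (S : Type) (mul : S -> S -> S)
  (Hassoc : forall a b c, mul (mul a b) c = mul a (mul b c))
  (Habund : abundant mul)
  (S0 : S -> Prop) (HS0 : qi_adequate_transversal mul S0)
  (bar ex fx : S -> S)
  (Hbar : forall x, transversal_data mul S0 x (bar x) (ex x) (fx x)) :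
  let Rset := fun x => ex x = ex (bar x) in
  let Lset := fun x => fx x = fx (bar x) in
  let inT := fun p : S * S => Lset (fst p) /\ Rset (snd p) /\ bar (fst p) = bar (snd p) in
  let mulT := fun p q : S * S =>
    (mul (mul (ex (fst p)) (snd p)) (fst q), mul (mul (snd p) (fst q)) (fx (snd q))) in
  closed mulT inT /\ assoc_on mulT inT /\ abundant_in mulT inT /\
  exists phi : S -> S * S,
    (forall s, inT (phi s)) /\
    (forall p, inT p -> exists! s, phi s = p) /\
    (forall s t, phi (mul s t) = mulT (phi s) (phi t)).
Proof.
  intros Rset Lset inT mulT.
  pose proof (to_T_in S mul S0 bar ex fx Hassoc HS0 Hbar) as Hin.
  pose proof (to_T_onto S mul S0 bar ex fx Hassoc HS0 Hbar) as Honto.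
  pose proof (to_T_inj S mul S0 bar ex fx Hassoc HS0 Hbar) as Hinj.
  pose proof (to_T_mul S mul S0 bar ex fx Hassoc HS0 Hbar) as Hmul.
  destruct (abundant_transport mulT inT _ Hassoc Habund Hin Honto Hinj Hmul) as [Hcl [HA Hab]].
  split; [exact Hcl | split; [exact HA | split; [exact Hab |]]].
  exists (to_T S mul bar ex fx); split; [exact Hin | split; [| exact Hmul]].
  intros p Hp; destruct (Honto p Hp) as [s Hs].
  exists s; split; [exact Hs |].
  intros t Ht; apply Hinj; congruence.
Qed.
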